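(* Let $d$ be a positive integer and let $A\in\mathbb{R}^{[m]\times[n]}$ be a matrix that does not have an elimination ordering. Let $E\subseteq[n]$ be the set produced by the following procedure: start with $E=\emptyset$; while $\mathrm{elm}(A,E)$ can be eliminated at some column, choose such a column $j\in[n]\setminus E$ and set $E\leftarrow E\cup\{j\}$. Let $\Delta=[n]\setminus E$ and let $A^r$ be the submatrix of $A$ consisting of the columns indexed by $\Delta$ (so $A^r\in\mathbb{R}^{[m]\times\Delta}$, and feasible solutions of $(A^r,b^r)$ lie in $D^{\Delta}$). If there exists $b^r\in\mathbb{R}^{[m]}$ such that the solution graph $G(R(A^r,b^r))$ is not connected, then there exists $b\in\mathbb{R}^{[m]}$ such that the solution graph $G(R(A,b))$ is not connected.
   Context: Fix a positive integer $d$ and let $D=\{0,1,\dots,d\}$; $[n]=\{1,\dots,n\}$. For a real matrix $A$ with row set $[m]$ and column index set $J$, and $b\in\mathbb{R}^{[m]}$, $R(A,b)=\{x\in D^{J} : Ax\ge b\}$. For $R\subseteq D^{J}$, the solution graph $G(R)$ is the undirected graph with vertex set $R$ in which $x,y$ are adjacent iff they differ in exactly one coordinate. A matrix $A=(a_{ij})$ with column index set $J$ can be eliminated at column $j\in J$ if (i) for every row $i$ with $a_{ij}>0$ we have $a_{ij'}=0$ for all $j'\in J\setminus\{j\}$, or (ii) for every row $i$ with $a_{ij}<0$ we have $a_{ij'}=0$ for all $j'\in J\setminus\{j\}$. For $J'\subseteq[n]$, $\mathrm{elm}(A,J')$ is the submatrix of $A$ obtained by deleting the columns indexed by $J'$.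 A sequence $(j_1,\dots,j_n)$ of the elements of $[n]$ is an elimination ordering (EO) of $A\in\mathbb{R}^{[m]\times[n]}$ if for every $t\in[n]$ the matrix $\mathrm{elm}(A,\{j_1,\dots,j_{t-1}\})$ can be eliminated at column $j_t$. *)

From HB Require Import structures.
From mathcomp Require Import all_boot all_order all_algebra.
From mathcomp Require Import reals.
Set Implicit Arguments. Unset Strict Implicit. Unset Printing Implicit Defensive.
Import Order.TTheory GRing.Theory Num.Theory.
Local Open Scope ring_scope.


Definition feasible (R : realType) (d m : nat) (J : finType) (A : 'I_m -> J -> R) (b : 'I_m -> R)
  (x : {ffun J -> 'I_d.+1}) : bool :=
  [forall i : 'I_m, b i <= \sum_(j : J) A i j * (x j)%:R].
Arguments feasible {R} d {m J} A b x.

Definition adjacent (d : nat) (J : finType) (x y : {ffun J -> 'I_d.+1}) : bool :=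
  #|[set j : J | x j != y j]| == 1%N.

Definition sol_edge (R : realType) (d m : nat) (J : finType) (A : 'I_m -> J -> R) (b : 'I_m -> R)
  : rel {ffun J -> 'I_d.+1} :=
  fun x y => [&& feasible d A b x, feasible d A b y & adjacent x y].
Arguments sol_edge {R} d {m J} A b.

Definition sol_graph_connected (R : realType) (d m : nat) (J : finType) (A : 'I_m -> J -> R)
  (b : 'I_m -> R) : Prop :=
  forall x y : {ffun J -> 'I_d.+1}, feasible d A b x -> feasible d A b y ->
    connect (sol_edge d A b) x y.
Arguments sol_graph_connected {R} d {m J} A b.

(** elm(A, [n] \ S) (the columns in S remain) can be eliminated at column j *)
Definition can_elim (R : realType) (m n : nat) (A : 'M[R]_(m, n)) (S : {set 'I_n}) (j : 'I_n) : Prop :=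
  j \in S /\
  ((forall i : 'I_m, 0 < A i j -> forall j', j' \in S -> j' != j -> A i j' = 0) \/
   (forall i : 'I_m, A i j < 0 -> forall j', j' \in S -> j' != j -> A i j' = 0)).
Arguments can_elim {R m n} A S j.

Fixpoint elim_run (R : realType) (m n : nat) (A : 'M[R]_(m, n)) (S : {set 'I_n}) (s : seq 'I_n) : Prop :=
  match s with
  | [::] => True
  | j :: s' => can_elim A S j /\ elim_run A (S :\ j) s'
  end.
Arguments elim_run {R m n} A S s.

Definition is_EO (R : realType) (m n : nat) (A : 'M[R]_(m, n)) (s : seq 'I_n) : Prop :=
  perm_eq s (enum 'I_n) /\ elim_run A [set: 'I_n] s.
Arguments is_EO {R m n} A s.

Definition has_EO (R : realType) (m n : nat) (A : 'M[R]_(m, n)) : Prop := exists s, is_EO A s.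
Arguments has_EO {R m n} A.

Definition greedy_output (R : realType) (m n : nat) (A : 'M[R]_(m, n)) (E : {set 'I_n}) : Prop :=
  exists s : seq 'I_n, elim_run A [set: 'I_n] s /\ E = [set j in s] /\
    ~ (exists j, can_elim A (~: E) j).
Arguments greedy_output {R m n} A E.

Definition restr_cols (R : realType) (m n : nat) (A : 'M[R]_(m, n)) (Delta : {set 'I_n})
  : 'I_m -> {j : 'I_n | j \in Delta} -> R :=
  fun i j => A i (val j).
Arguments restr_cols {R} {m n} A Delta i j.

From HB Require Import structures.
From mathcomp Require Import all_boot all_order all_algebra.
From mathcomp Require Import reals.
Set Implicit Arguments. Unset Strict Implicit. Unset Printing Implicit Defensive.
Import Order.TTheory GRing.Theory Num.Theory.
Local Open Scope ring_scope.

(* Write Delta for the set of surviving columns. A column j outside Delta was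
   eliminable while all columns of Delta were still present, so in the rows
   of A that meet Delta the coefficients of column j all have the same sign.
   Freeze x_j at the end z_j of {0, ..., d} that maximises these terms and
   move their contribution into the right-hand side: b := br + sum_(j \notin Delta)
   A_j z_j. Then extending by z embeds R(A^r, br) into R(A, b), restricting to
   Delta maps R(A, b) back into R(A^r, br) (a row missing Delta restricts to
   0 >= br_i, which holds as soon as R(A^r, br) is nonempty), and restriction
   sends edges to edges or loops. So a disconnected G(R(A^r, br)) forces a
   disconnected G(R(A, b)). *)

Lemma homo_connect (T T' : finType) (e : rel T) (e' : rel T') (f : T -> T') :
  {homo f : x y / e x y >-> connect e' x y} ->
  {homo f : x y / connect e x y >-> connect e' x y}.
Proof.
move=> f_e x y /connectP[p xp ->]; elim: p x xp => [|z p IHp] x /=.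
  by rewrite connect0.
by case/andP=> /f_e xz /IHp; apply: connect_trans.
Qed.

Section RestrictExtend.
Variables (T : finType) (X : Type) (D : {set T}).

Definition restrict_ffun (w : {ffun T -> X}) : {ffun {j | j \in D} -> X} :=
  [ffun k => w (val k)].

Definition extend_ffun (dflt : T -> X) (x : {ffun {j | j \in D} -> X}) : {ffun T -> X} :=
  [ffun j => if insub j is Some k then x k else dflt j].

Lemma restrict_extend_ffun dflt x : restrict_ffun (extend_ffun dflt x) = x.
Proof. by apply/ffunP => k; rewrite !ffunE valK. Qed.

Lemma extend_ffun_notin dflt x j : j \notin D -> extend_ffun dflt x j = dflt j.
Proof. by move=> jD; rewrite ffunE insubN. Qed.

End RestrictExtend.

Arguments restrict_ffun {T X} D w.
Arguments extend_ffun {T X} D dflt x.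

Lemma adjacent_restrict d (T : finType) (D : {set T}) (u w : {ffun T -> 'I_d.+1}) :
  adjacent u w ->
  restrict_ffun D u = restrict_ffun D w \/ adjacent (restrict_ffun D u) (restrict_ffun D w).
Proof.
rewrite /adjacent => /cards1P[j diff_uw].
have diff_restr : [set k | restrict_ffun D u k != restrict_ffun D w k] = val @^-1: [set j].
  by apply/setP => k; rewrite -diff_uw !inE !ffunE.
have [jD | jND] := boolP (j \in D).
  right; rewrite diff_restr; apply/cards1P; exists (Sub j jD).
  by apply/setP => k; rewrite !inE -val_eqE SubK.
left; apply/ffunP => k; apply/eqP; apply: contraNT jND => neq.
have : k \in val @^-1: [set j] by rewrite -diff_restr inE.
by rewrite !inE => /eqP <-; apply: valP.
Qed.

Lemma elim_run_can_elim (R : realType) m n (A : 'M[R]_(m, n)) S s j :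
  elim_run A S s -> j \in s -> exists2 S', can_elim A S' j & S :\: [set k in s] \subset S'.
Proof.
elim: s S => [|k s IHs] S //= [elim_k run_s]; rewrite inE => /predU1P[-> | js].
  by exists S; [exact: elim_k | apply: subsetDl].
have [S' elim_j sub] := IHs _ run_s js; exists S' => //.
apply: subset_trans sub; apply/subsetP => x; rewrite !inE.
by case: (x == k); rewrite ?andbF.
Qed.

Section BestValue.
Variables (R : realType) (d m n : nat) (A : 'M[R]_(m, n)) (D : {set 'I_n}).

Definition touches (i : 'I_m) : bool := [exists j in D, A i j != 0].

Definition pos_isolated (j : 'I_n) : bool := [forall i, (0 < A i j) ==> ~~ touches i].

Definition best_value (j : 'I_n) : 'I_d.+1 := if pos_isolated j then ord0 else ord_max.

Lemma best_value_max S j i (w : 'I_d.+1) :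
  can_elim A S j -> D \subset S -> j \notin D -> touches i ->
  A i j * w%:R <= A i j * (best_value j)%:R.
Proof.
move=> [_ elim_j] DS jD touch_i; have [j' /andP[j'D Aij'_neq0]] := existsP touch_i.
have j'S : j' \in S := subsetP DS j' j'D.
have j'j : j' != j by apply: contraNneq jD => <-.
rewrite /best_value; case: ifP => [/forallP/(_ i) pos_i | not_pos].
  have Aij_le0 : A i j <= 0 by rewrite leNgt; apply: contraTN touch_i; apply/implyP.
  by rewrite mulr0 mulr_le0_ge0.
case: elim_j => [elim_pos | elim_neg].
  case/negP: not_pos; apply/forallP => i'; apply/implyP => Ai'j_gt0.
  rewrite negb_exists; apply/forallP => k; rewrite negb_and negbK -implybE.
  apply/implyP => kD.
  by apply/eqP/(elim_pos i' Ai'j_gt0 k (subsetP DS k kD)); apply: contraNneq jD => <-.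
have Aij_ge0 : 0 <= A i j.
  by rewrite leNgt; apply: contra Aij'_neq0 => /elim_neg/(_ j' j'S j'j)/eqP.
by rewrite ler_wpM2l // ler_nat leq_ord.
Qed.

End BestValue.

Section Reduction.
Variables (R : realType) (d m n : nat) (A : 'M[R]_(m, n)) (D : {set 'I_n}).
Hypothesis elim_outside : forall j, j \notin D -> exists2 S, can_elim A S j & D \subset S.
Variable br : 'I_m -> R.

Local Notation Ar := (restr_cols A D).
Local Notation z := (best_value d A D).
Local Notation extend := (extend_ffun D z).
Local Notation restrict := (restrict_ffun D).

Definition shifted_rhs (i : 'I_m) : R := br i + \sum_(j in ~: D) A i j * (z j)%:R.

Lemma row_sum_split i (w : {ffun 'I_n -> 'I_d.+1}) :
  \sum_j A i j * (w j)%:R =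
  \sum_k Ar i k * (restrict w k)%:R + \sum_(j in ~: D) A i j * (w j)%:R.
Proof.
rewrite (bigID (mem D)) /= big_sub; congr (_ + _).
  by apply: eq_bigr => k _; rewrite ffunE.
by apply: eq_bigl => j; rewrite in_setC.
Qed.

Lemma restr_cols_untouched i k : ~~ touches A D i -> Ar i k = 0.
Proof.
by rewrite negb_exists => /forallP/(_ (val k)); rewrite (valP k) negbK => /eqP.
Qed.

Lemma feasible_untouched x i : feasible d Ar br x -> ~~ touches A D i -> br i <= 0.
Proof.
move=> /forallP/(_ i) + untouched; rewrite big1 // => k _.
by rewrite restr_cols_untouched ?mul0r.
Qed.

Lemma feasible_extend x : feasible d Ar br x -> feasible d (fun i j => A i j) shifted_rhs (extend x).
Proof.
move=> /forallP x_feas; apply/forallP => i.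
rewrite row_sum_split restrict_extend_ffun lerD // [leRHS](eq_bigr (fun j => A i j * (z j)%:R)) // => j.
by rewrite in_setC => /extend_ffun_notin ->.
Qed.

Lemma feasible_restrict x w :
  feasible d Ar br x -> feasible d (fun i j => A i j) shifted_rhs w ->
  feasible d Ar br (restrict w).
Proof.
move=> x_feas /forallP w_feas; apply/forallP => i.
have [touch_i | untouched] := boolP (touches A D i); last first.
  by rewrite big1 => [|k _]; [exact: feasible_untouched x_feas untouched
                              | rewrite restr_cols_untouched ?mul0r].
have w_row := w_feas i; rewrite row_sum_split /shifted_rhs in w_row.
rewrite -(lerD2r (\sum_(j in ~: D) A i j * (z j)%:R)); apply: le_trans w_row _.
rewrite lerD2l; apply: ler_sum => j; rewrite in_setC => jD.
have [S elim_j DS] := elim_outside jD.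
exact: best_value_max elim_j DS jD touch_i.
Qed.

Lemma sol_edge_restrict x :
  feasible d Ar br x ->
  {homo restrict : u w / sol_edge d (fun i j => A i j) shifted_rhs u w >->
                         connect (sol_edge d Ar br) u w}.
Proof.
move=> x_feas u w /and3P[u_feas w_feas /(adjacent_restrict D)[-> | adj]]; first exact: connect0.
by apply: connect1; rewrite /sol_edge !(feasible_restrict x_feas) // adj.
Qed.

Lemma sol_graph_connected_restrict :
  sol_graph_connected d (fun i j => A i j) shifted_rhs -> sol_graph_connected d Ar br.
Proof.
move=> connected x y x_feas y_feas.
rewrite -(restrict_extend_ffun z x) -(restrict_extend_ffun z y).
apply: (homo_connect (sol_edge_restrict x_feas)).
exact: connected (feasible_extend x_feas) (feasible_extend y_feas).
Qed.

End Reduction.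

Theorem lemma2 (R : realType) (d m n : nat) (A : 'M[R]_(m, n)) (E : {set 'I_n}) :
  (0 < d)%N ->
  ~ has_EO A ->
  greedy_output A E ->
  (exists br : 'I_m -> R, ~ sol_graph_connected d (restr_cols A (~: E)) br) ->
  exists b : 'I_m -> R, ~ sol_graph_connected d (fun i j => A i j) b.
Proof.
move=> _ _ [s [run [-> _]]] [br disconnected].
have elim_outside j : j \notin ~: [set k in s] ->
    exists2 S, can_elim A S j & ~: [set k in s] \subset S.
  rewrite in_setC negbK inE => js; have [S elim_j sub] := elim_run_can_elim run js.
  by exists S; rewrite // -setTD.
exists (shifted_rhs d A (~: [set k in s]) br).
by move/(sol_graph_connected_restrict elim_outside).
Qed.
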